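(* Let $A/B$ and $A'/B'$ be ring extensions, and suppose there are Morita modules ${}_AM_{A'}$ and ${}_BN_{B'}$ with ${}_AA\otimes_BN_{B'}\cong {}_AM_{B'}$. Let $N^{*}=\mathrm{Hom}^r({}_BN,{}_BB)$, choose $g_k,f_j\in N^{*}$ and $n_k,m_j\in N$ (finitely many) with $\sum_k n_k^{g_k}=1$ and $\sum_j n^{f_j}m_j=n$ for all $n\in N$, and identify $A'$ and $B'$ with the rings $N^{*}\otimes_BA\otimes_BN$ and $N^{*}\otimes_BB\otimes_BN$ as described in the context. Define $\psi:A\otimes_BA\to A'\otimes_{B'}A'$ by $\psi(x\otimes y)=\sum_{j,k}(f_j\otimes x\otimes n_k)\otimes(g_k\otimes y\otimes m_j)$. Then $\psi$ restricts to an additive group isomorphism $(A\otimes_BA)^B\cong (A'\otimes_{B'}A')^{B'}$.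
   Context: All rings have identity, subrings contain the identity, and modules are unital. A ring extension $A/B$ means $B$ is a subring of $A$. For an $R$-$R$-module $S$ and a subring (or subset) $X$ of $R$, $S^X=\{s\in S\mid xs=sx \text{ for all } x\in X\}$. For modules ${}_AM$, ${}_AN$, $\mathrm{Hom}^r({}_AM,{}_AN)$ denotes left $A$-homomorphisms written on the right of their arguments (the image of $u$ under $\rho$ is written $u^\rho$), and $\mathrm{End}^r({}_AM)=\mathrm{Hom}^r({}_AM,{}_AM)$. For modules ${}_AX_{A'}$, ${}_AY_{A'}$, write $X\mid Y$ if $X$ is isomorphic to a direct summand of a finite direct sum of copies of $Y$, and $X\sim Y$ if $X\mid Y$ and $Y\mid X$. A bimodule ${}_AM_{A'}$ is a Morita module if ${}_AM\sim{}_AA$ and $\mathrm{End}^r({}_AM)=A'$ (with $A'$ acting on the right). $N^{*}$ is a $B'$-$B$-bimodule via $u^{(b'\rho b)}=(ub')^\rho b$. Identification: the map $N^{*}\otimes_BA\otimes_BN\to \mathrm{End}^r({}_AA\otimes_BN)\cong A'$, $\rho\otimes x\otimes u\mapsto[y\otimes v\mapsto y\,v^\rho x\otimes u]$, is a ring isomorphism when $N^{*}\otimes_BA\otimes_BN$ carries the multiplication $(\rho\otimes x\otimes u)(\sigma\otimes y\otimes v)=\rho\otimes x\,u^\sigma y\otimes v$ (identity $\sum_j f_j\otimes1\otimes m_j$); it carries $N^{*}\otimes_BB\otimes_BN$ onto $B'$. Through this identification $A'$ and $B'$ are regarded as $N^{*}\otimes_BA\otimes_BN$ and $N^{*}\otimes_BB\otimes_BN$.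 *)

From HB Require Import structures.
From mathcomp Require Import all_boot all_order all_algebra.
Set Implicit Arguments. Unset Strict Implicit. Unset Printing Implicit Defensive.
Import GRing.Theory.
Local Open Scope ring_scope.

Definition additive_fun (U V : zmodType) (f : U -> V) :=
  forall a b, f (a + b) = f a + f b.

Definition rng (B A : pzRingType) (i : B -> A) (a : A) : Prop := exists b, a = i b.

(* Biadditive maps A x A -> G which are balanced over the subring S of A,
   i.e. maps inducing additive maps out of A (x)_S A. *)
Definition balanced2 (A : pzRingType) (S : A -> Prop) (G : zmodType)
    (h : A -> A -> G) : Prop :=
  [/\ forall x y z, h (x + y) z = h x z + h y z,
      forall x y z, h x (y + z) = h x y + h x z &
      forall x b y, S b -> h (x * b) y = h x (b * y)].

(* (T, t) is a tensor product A (x)_S A (t x y = x (x) y): universal property. *)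
Definition is_tensor2 (A : pzRingType) (S : A -> Prop) (T : zmodType)
    (t : A -> A -> T) : Prop :=
  balanced2 S t /\
  forall (G : zmodType) (h : A -> A -> G), balanced2 S h ->
    exists phi : T -> G,
      [/\ additive_fun phi,
          forall x y, phi (t x y) = h x y &
          forall phi' : T -> G, additive_fun phi' ->
            (forall x y, phi' (t x y) = h x y) -> phi' =1 phi].

(* s lies in T^S, i.e. b s = s b for all b in S, where the left/right actions
   of b on T = A (x)_S A are the additive maps x(x)y |-> bx(x)y, x(x)y |-> x(x)yb. *)
Definition tcentral (A : pzRingType) (S : A -> Prop) (T : zmodType)
    (t : A -> A -> T) (s : T) : Prop :=
  forall b, S b ->
  forall L R : T -> T, additive_fun L -> additive_fun R ->
    (forall x y, L (t x y) = t (b * x) y) ->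
    (forall x y, R (t x y) = t x (y * b)) -> L s = R s.

(* rho : N -> B belongs to N^* = Hom^r(_B N, _B B) (u^rho written rho u). *)
Definition bdual (B : pzRingType) (N : lmodType B) (rho : N -> B) : Prop :=
  forall b u v, rho (b *: u + v) = b * rho u + rho v.

(* Triadditive B-balanced maps N^* x A x N -> G (N^* is a right B-module via
   u^(rho b) = u^rho b, A is a B-B-bimodule through i). *)
Definition balanced3 (B A : pzRingType) (i : B -> A) (N : lmodType B)
    (G : zmodType) (h : (N -> B) -> A -> N -> G) : Prop :=
  [/\ forall r s x u, bdual r -> bdual s ->
        h (fun v => r v + s v) x u = h r x u + h s x u,
      forall r x y u, bdual r -> h r (x + y) u = h r x u + h r y u,
      forall r x u v, bdual r -> h r x (u + v) = h r x u + h r x v,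
      forall r b x u, bdual r -> h (fun v => r v * b) x u = h r (i b * x) u &
      forall r x b u, bdual r -> h r (x * i b) u = h r x (b *: u)].

(* (T, t) is a tensor product N^* (x)_B A (x)_B N, t r x u = r (x) x (x) u. *)
Definition is_tensor3 (B A : pzRingType) (i : B -> A) (N : lmodType B)
    (T : zmodType) (t : (N -> B) -> A -> N -> T) : Prop :=
  balanced3 i t /\
  forall (G : zmodType) (h : (N -> B) -> A -> N -> G), balanced3 i h ->
    exists phi : T -> G,
      [/\ additive_fun phi,
          forall r x u, bdual r -> phi (t r x u) = h r x u &
          forall phi' : T -> G, additive_fun phi' ->
            (forall r x u, bdual r -> phi' (t r x u) = h r x u) -> phi' =1 phi].

(* A' is the ring N^* (x)_B A (x)_B N with the multiplication
   (r (x) x (x) u)(s (x) y (x) v) = r (x) x u^s y (x) v and identity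
   sum_j f_j (x) 1 (x) m_j. *)
Definition tensor_ring (B A : pzRingType) (i : B -> A) (N : lmodType B)
    (A' : pzRingType) (tau : (N -> B) -> A -> N -> A')
    (J : nat) (f : 'I_J -> N -> B) (m : 'I_J -> N) : Prop :=
  [/\ is_tensor3 i tau,
      forall r x u s y v, bdual r -> bdual s ->
        tau r x u * tau s y v = tau r (x * i (s u) * y) v &
      1 = \sum_(j < J) tau (f j) 1 (m j)].

(* B' = image of N^* (x)_B B (x)_B N in A'. *)
Definition Bprime (B A : pzRingType) (i : B -> A) (N : lmodType B)
    (A' : pzRingType) (tau : (N -> B) -> A -> N -> A') (a : A') : Prop :=
  exists (k : nat) (r : 'I_k -> N -> B) (b : 'I_k -> B) (u : 'I_k -> N),
    (forall q, bdual (r q)) /\ a = \sum_(q < k) tau (r q) (i (b q)) (u q).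

(* The inverse of psi on invariant tensors is
     (r (x) x (x) v) (x) (s (x) y (x) w)  |->  sum_k n_k^r x (x) v^s y w^(g_k),
   built from the contractions r (x) x (x) v |-> u^r x v^h of A' into A
   (u in N, h in N^* ); it is well defined on A' (x)_B' A' because these
   contractions are balanced against the generators r (x) b (x) w of B'.
   On B-invariant tensors the composite with psi collapses, through the
   dual-basis identities sum_j u^(f_j) m_j = u and sum_k n_k^(g_k) = 1, to
   s |-> sum_k n_k^(g_k) s = s; on B'-invariant tensors, which commute with the
   generators r (x) 1 (x) w of B', the other composite collapses to
   (sum_j f_j (x) 1 (x) m_j) s' = s'. *)

From HB Require Import structures.
From mathcomp Require Import all_boot all_order all_algebra.
From Stdlib Require Import ClassicalEpsilon.
Import GRing.Theory.
Local Open Scope ring_scope.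
Set Implicit Arguments. Unset Strict Implicit.

Section AdditiveFun.
Variables (U V W : zmodType).

Lemma additive_fun0 (h : U -> V) : additive_fun h -> h 0 = 0.
Proof. by move=> hD; apply: (addrI (h 0)); rewrite -hD !addr0. Qed.

Lemma additive_fun_sum (h : U -> V) (I : Type) (r : seq I) (P : pred I) (F : I -> U) :
  additive_fun h -> h (\sum_(j <- r | P j) F j) = \sum_(j <- r | P j) h (F j).
Proof. by move=> hD; apply: (big_morph h hD (additive_fun0 hD)). Qed.

Lemma additive_fun_comp (h : V -> W) (k : U -> V) :
  additive_fun h -> additive_fun k -> additive_fun (fun x => h (k x)).
Proof. by move=> hD kD a b; rewrite kD hD. Qed.

Lemma additive_fun_big (I : Type) (r : seq I) (P : pred I) (F : I -> U -> V) :
  (forall j, additive_fun (F j)) -> additive_fun (fun x => \sum_(j <- r | P j) F j x).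
Proof. by move=> FD a b; rewrite -big_split; apply: eq_bigr => j _; apply: FD. Qed.

End AdditiveFun.

Section BDual.
Variables (B : pzRingType) (N : lmodType B) (r : N -> B).
Hypothesis r_dual : bdual r.

Lemma bdualD u v : r (u + v) = r u + r v.
Proof. by have := r_dual 1 u v; rewrite scale1r mul1r. Qed.

Lemma bdual_additive : additive_fun r.
Proof. exact: bdualD. Qed.

Lemma bdualZ b u : r (b *: u) = b * r u.
Proof. by have := r_dual b u 0; rewrite addr0 (additive_fun0 bdual_additive) addr0. Qed.

Lemma bdual_sum (I : Type) (s : seq I) (P : pred I) (F : I -> N) :
  r (\sum_(j <- s | P j) F j) = \sum_(j <- s | P j) r (F j).
Proof. exact: additive_fun_sum bdual_additive. Qed.

End BDual.

Section TensorLift2.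
Variables (A : pzRingType) (S : A -> Prop) (T : zmodType) (t : A -> A -> T).

Definition is_lift2 (G : zmodType) (h : A -> A -> G) (phi : T -> G) :=
  additive_fun phi /\ forall x y, phi (t x y) = h x y.

Definition lift2 (G : zmodType) (h : A -> A -> G) : T -> G :=
  epsilon (inhabits (fun _ => 0)) (is_lift2 h).

Hypothesis ht : is_tensor2 S t.

Lemma lift2_spec (G : zmodType) (h : A -> A -> G) : balanced2 S h -> is_lift2 h (lift2 h).
Proof.
move=> hb; case: ht => _ /(_ G h hb) [phi [phiD phi_t _]].
by apply: epsilon_spec; exists phi.
Qed.

Lemma lift2_additive (G : zmodType) (h : A -> A -> G) :
  balanced2 S h -> additive_fun (lift2 h).
Proof. by case/lift2_spec. Qed.

Lemma lift2_t (G : zmodType) (h : A -> A -> G) :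
  balanced2 S h -> forall x y, lift2 h (t x y) = h x y.
Proof. by case/lift2_spec. Qed.

Lemma tensor2_ext (G : zmodType) (F1 F2 : T -> G) :
  additive_fun F1 -> additive_fun F2 ->
  (forall x y, F1 (t x y) = F2 (t x y)) -> forall s, F1 s = F2 s.
Proof.
move=> F1D F2D eqF; case: ht => [[tDl tDr tB] univ].
have hb : balanced2 S (fun x y => F1 (t x y)).
  by split=> [x y z|x y z|x b y Sb]; rewrite ?tDl ?tDr ?F1D ?tB.
have [phi [_ _ uniq_phi]] := univ G _ hb.
by move=> s; rewrite (uniq_phi F1) // (uniq_phi F2) // => x y; rewrite eqF.
Qed.

Lemma tensor2Dl x y z : t (x + y) z = t x z + t y z.
Proof. by case: ht => [[]]. Qed.

Lemma tensor2Dr x y z : t x (y + z) = t x y + t x z.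
Proof. by case: ht => [[]]. Qed.

Lemma tensor2_bal x b y : S b -> t (x * b) y = t x (b * y).
Proof. by case: ht => [[_ _ tB] _]; apply: tB. Qed.

Lemma tensor2_suml (I : Type) (r : seq I) (P : pred I) (F : I -> A) y :
  t (\sum_(j <- r | P j) F j) y = \sum_(j <- r | P j) t (F j) y.
Proof. by apply: (additive_fun_sum (h := t^~ y)) => ? ?; apply: tensor2Dl. Qed.

Lemma tensor2_sumr (I : Type) (r : seq I) (P : pred I) (F : I -> A) x :
  t x (\sum_(j <- r | P j) F j) = \sum_(j <- r | P j) t x (F j).
Proof. by apply: (additive_fun_sum (h := t x)) => ? ?; apply: tensor2Dr. Qed.

Definition lmul (a : A) : T -> T := lift2 (fun x y => t (a * x) y).
Definition rmul (a : A) : T -> T := lift2 (fun x y => t x (y * a)).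

Lemma lmul_balanced a : balanced2 S (fun x y => t (a * x) y).
Proof.
by split=> [x y z|x y z|x b y Sb]; rewrite ?mulrDr ?tensor2Dl ?tensor2Dr // mulrA tensor2_bal.
Qed.

Lemma rmul_balanced a : balanced2 S (fun x y => t x (y * a)).
Proof.
by split=> [x y z|x y z|x b y Sb]; rewrite ?mulrDl ?tensor2Dl ?tensor2Dr // tensor2_bal // mulrA.
Qed.

Lemma lmul_additive a : additive_fun (lmul a).
Proof. exact/lift2_additive/lmul_balanced. Qed.

Lemma rmul_additive a : additive_fun (rmul a).
Proof. exact/lift2_additive/rmul_balanced. Qed.

Lemma lmul_t a x y : lmul a (t x y) = t (a * x) y.
Proof. exact/lift2_t/lmul_balanced. Qed.

Lemma rmul_t a x y : rmul a (t x y) = t x (y * a).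
Proof. exact/lift2_t/rmul_balanced. Qed.

Lemma lmul_sum (I : Type) (r : seq I) (P : pred I) (a : I -> A) s :
  \sum_(j <- r | P j) lmul (a j) s = lmul (\sum_(j <- r | P j) a j) s.
Proof.
move: s; apply: tensor2_ext => [||x y].
- by apply: additive_fun_big => j; apply: lmul_additive.
- exact: lmul_additive.
- by rewrite lmul_t mulr_suml tensor2_suml; apply: eq_bigr => j _; rewrite lmul_t.
Qed.

Lemma rmul_sum (I : Type) (r : seq I) (P : pred I) (a : I -> A) s :
  \sum_(j <- r | P j) rmul (a j) s = rmul (\sum_(j <- r | P j) a j) s.
Proof.
move: s; apply: tensor2_ext => [||x y].
- by apply: additive_fun_big => j; apply: rmul_additive.
- exact: rmul_additive.
- by rewrite rmul_t mulr_sumr tensor2_sumr; apply: eq_bigr => j _; rewrite rmul_t.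
Qed.

Lemma lmul1 s : lmul 1 s = s.
Proof.
move: s; apply: (tensor2_ext (F2 := id)) => // [|x y]; first exact: lmul_additive.
by rewrite lmul_t mul1r.
Qed.

Lemma rmul1 s : rmul 1 s = s.
Proof.
move: s; apply: (tensor2_ext (F2 := id)) => // [|x y]; first exact: rmul_additive.
by rewrite rmul_t mulr1.
Qed.

Lemma lmul_rmulC a b s : lmul a (rmul b s) = rmul b (lmul a s).
Proof.
move: s; apply: tensor2_ext => [||x y].
- exact: additive_fun_comp (lmul_additive a) (rmul_additive b).
- exact: additive_fun_comp (rmul_additive b) (lmul_additive a).
- by rewrite rmul_t !lmul_t rmul_t.
Qed.

Lemma rmulM a b s : rmul b (rmul a s) = rmul (a * b) s.
Proof.
move: s; apply: tensor2_ext => [||x y].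
- exact: additive_fun_comp (rmul_additive b) (rmul_additive a).
- exact: rmul_additive.
- by rewrite !rmul_t mulrA.
Qed.

Lemma tcentralP s : tcentral S t s <-> forall b, S b -> lmul b s = rmul b s.
Proof.
split=> [s_central b Sb | comm b Sb L R LD RD L_t R_t].
  exact: s_central b Sb _ _ (lmul_additive b) (rmul_additive b) (lmul_t b) (rmul_t b).
have -> : L s = lmul b s.
  by move: s {comm}; apply: tensor2_ext => // [|x y]; [exact: lmul_additive | rewrite L_t lmul_t].
have -> : R s = rmul b s.
  by move: s {comm}; apply: tensor2_ext => // [|x y]; [exact: rmul_additive | rewrite R_t rmul_t].
exact: comm.
Qed.

End TensorLift2.

Section TensorLift3.
Variables (B A : pzRingType) (i : B -> A) (N : lmodType B) (T : zmodType)
  (tau : (N -> B) -> A -> N -> T).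

Definition is_lift3 (G : zmodType) (h : (N -> B) -> A -> N -> G) (phi : T -> G) :=
  additive_fun phi /\ forall r x u, bdual r -> phi (tau r x u) = h r x u.

Definition lift3 (G : zmodType) (h : (N -> B) -> A -> N -> G) : T -> G :=
  epsilon (inhabits (fun _ => 0)) (is_lift3 h).

Hypothesis htau : is_tensor3 i tau.

Lemma lift3_spec (G : zmodType) (h : (N -> B) -> A -> N -> G) :
  balanced3 i h -> is_lift3 h (lift3 h).
Proof.
move=> hb; case: htau => _ /(_ G h hb) [phi [phiD phi_tau _]].
by apply: epsilon_spec; exists phi.
Qed.

Lemma lift3_additive (G : zmodType) (h : (N -> B) -> A -> N -> G) :
  balanced3 i h -> additive_fun (lift3 h).
Proof. by case/lift3_spec. Qed.

Lemma lift3_tau (G : zmodType) (h : (N -> B) -> A -> N -> G) :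
  balanced3 i h -> forall r x u, bdual r -> lift3 h (tau r x u) = h r x u.
Proof. by case/lift3_spec. Qed.

Lemma tensor3_ext (G : zmodType) (F1 F2 : T -> G) :
  additive_fun F1 -> additive_fun F2 ->
  (forall r x u, bdual r -> F1 (tau r x u) = F2 (tau r x u)) -> forall s, F1 s = F2 s.
Proof.
move=> F1D F2D eqF; case: htau => [[tD1 tD2 tD3 tB1 tB2] univ].
have hb : balanced3 i (fun r x u => F1 (tau r x u)).
  by split=> *; rewrite ?tD1 ?tD2 ?tD3 ?tB1 ?tB2 ?F1D.
have [phi [_ _ uniq_phi]] := univ G _ hb.
by move=> s; rewrite (uniq_phi F1) // (uniq_phi F2) // => r x u hr; rewrite eqF.
Qed.

Lemma tensor3Dm r x y u : bdual r -> tau r (x + y) u = tau r x u + tau r y u.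
Proof. by case: htau => [[_ tD _ _ _] _]; apply: tD. Qed.

Lemma tensor3_bal r x b u : bdual r -> tau r (x * i b) u = tau r x (b *: u).
Proof. by case: htau => [[_ _ _ _ tB] _]; apply: tB. Qed.

Lemma tensor3_summ r (I : Type) (s : seq I) (P : pred I) (F : I -> A) u : bdual r ->
  tau r (\sum_(j <- s | P j) F j) u = \sum_(j <- s | P j) tau r (F j) u.
Proof.
by move=> hr; apply: (additive_fun_sum (h := tau r ^~ u)) => ? ?; apply: tensor3Dm.
Qed.

End TensorLift3.

Section InvariantIso.
Variables (B A : pzRingType) (i : {rmorphism B -> A}) (N : lmodType B)
  (J K : nat) (f : 'I_J -> N -> B) (m : 'I_J -> N)
  (g : 'I_K -> N -> B) (n : 'I_K -> N)
  (A' : pzRingType) (tau : (N -> B) -> A -> N -> A')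
  (T : zmodType) (t : A -> A -> T) (T' : zmodType) (t' : A' -> A' -> T')
  (psi : T -> T').
Hypotheses (f_dual : forall j, bdual (f j)) (g_dual : forall k, bdual (g k))
  (dual_basis : forall u : N, \sum_(j < J) f j u *: m j = u)
  (gn1 : \sum_(k < K) g k (n k) = 1)
  (htau : is_tensor3 i tau)
  (tau_mul : forall r x u s y v, bdual r -> bdual s ->
     tau r x u * tau s y v = tau r (x * i (s u) * y) v)
  (tau_one : 1 = \sum_(j < J) tau (f j) 1 (m j))
  (ht : is_tensor2 (rng i) t) (ht' : is_tensor2 (Bprime i tau) t')
  (psiD : additive_fun psi)
  (psi_t : forall x y, psi (t x y) =
     \sum_(j < J) \sum_(k < K) t' (tau (f j) x (n k)) (tau (g k) y (m j))).

Local Hint Resolve f_dual g_dual : core.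

Local Notation lm := (lmul t).
Local Notation rm := (rmul t).
Local Notation lm' := (lmul t').
Local Notation rm' := (rmul t').

Lemma rng_rmorph c : rng i (i c).
Proof. by exists c. Qed.

Lemma Bprime_tau1 (r : N -> B) w : bdual r -> Bprime i tau (tau r 1 w).
Proof.
move=> hr; exists 1%N, (fun _ => r), (fun _ => 1), (fun _ => w).
by rewrite big_ord1 rmorph1.
Qed.

Lemma tensor2_balB x c y : t (x * i c) y = t x (i c * y).
Proof. exact/(tensor2_bal ht)/rng_rmorph. Qed.

Lemma bdual_dual_basis (h : N -> B) w : bdual h -> \sum_(j < J) f j w * h (m j) = h w.
Proof.
move=> hh; rewrite -[in RHS](dual_basis w) bdual_sum //.
by apply: eq_bigr => j _; rewrite bdualZ.
Qed.

Lemma tensor2_dual_basis (h : N -> B) X Y w : bdual h ->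
  \sum_(j < J) t (X * i (f j w)) (i (h (m j)) * Y) = t X (i (h w) * Y).
Proof.
move=> hh; rewrite -(bdual_dual_basis w hh) rmorph_sum mulr_suml (tensor2_sumr ht).
by apply: eq_bigr => j _; rewrite tensor2_balB rmorphM mulrA.
Qed.

Lemma tau_split_n (r : N -> B) X u : bdual r ->
  tau r X u = \sum_(k < K) tau r X (n k) * tau (g k) 1 u.
Proof.
move=> hr; under eq_bigr do rewrite tau_mul // mulr1.
by rewrite -(tensor3_summ htau) // -mulr_sumr -rmorph_sum gn1 rmorph1 mulr1.
Qed.

Lemma tau_unit_l (r : N -> B) X u : bdual r ->
  tau r X u = \sum_(j < J) tau (f j) (i (r (m j)) * X) u.
Proof.
move=> hr; rewrite -[LHS]mul1r tau_one mulr_suml.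
by apply: eq_bigr => j _; rewrite tau_mul // mul1r.
Qed.

Lemma tau_unit_r (r : N -> B) X w : bdual r ->
  tau r X w = \sum_(j < J) tau r (X * i (f j w)) (m j).
Proof.
move=> hr; rewrite -[LHS]mulr1 tau_one mulr_sumr.
by apply: eq_bigr => j _; rewrite tau_mul // mulr1.
Qed.

Lemma tensor2'_split_n (r s : N -> B) X Y u w : bdual r -> bdual s ->
  t' (tau r X u) (tau s Y w) = \sum_(k < K) t' (tau r X (n k)) (tau (g k) (i (s u) * Y) w).
Proof.
move=> hr hs; rewrite (tau_split_n _ _ hr) (tensor2_suml ht'); apply: eq_bigr => k _.
by rewrite (tensor2_bal ht' _ _ (Bprime_tau1 _ (g_dual k))) tau_mul // mul1r.
Qed.

Lemma tensor2'_ext (G : zmodType) (F1 F2 : T' -> G) :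
  additive_fun F1 -> additive_fun F2 ->
  (forall r s x u y v, bdual r -> bdual s ->
     F1 (t' (tau r x u) (tau s y v)) = F2 (t' (tau r x u) (tau s y v))) ->
  forall s', F1 s' = F2 s'.
Proof.
move=> F1D F2D eqF; apply: (tensor2_ext ht') => // a b; move: a.
apply: (tensor3_ext htau) => [a1 a2|a1 a2|r x u hr]; rewrite ?(tensor2Dl ht') ?F1D ?F2D //.
move: b; apply: (tensor3_ext htau) => [b1 b2|b1 b2|s y v hs]; rewrite ?(tensor2Dr ht') ?F1D ?F2D //.
exact: eqF.
Qed.

Definition contract (u : N) (h : N -> B) : A' -> A :=
  lift3 tau (fun r x v => i (r u) * x * i (h v)).

Lemma contract_balanced (u : N) (h : N -> B) :
  bdual h -> balanced3 i (fun r x v => i (r u) * x * i (h v)).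
Proof.
move=> hh; split=> [r s x v _ _|r x y v _|r x v w _|r b x v _|r x b v _].
- by rewrite rmorphD !mulrDl.
- by rewrite mulrDr mulrDl.
- by rewrite bdualD // rmorphD mulrDr.
- by rewrite rmorphM !mulrA.
- by rewrite bdualZ // rmorphM !mulrA.
Qed.

Lemma contract_additive (u : N) (h : N -> B) : bdual h -> additive_fun (contract u h).
Proof. by move=> hh; apply/(lift3_additive htau)/contract_balanced. Qed.

Lemma contract_tau (u : N) (h r : N -> B) x v : bdual h -> bdual r ->
  contract u h (tau r x v) = i (r u) * x * i (h v).
Proof. by move=> hh; apply/(lift3_tau htau)/contract_balanced. Qed.

Definition contract_pair (u : N) (h : N -> B) (a1 a2 : A') : T :=
  \sum_(j < J) t (contract u (f j) a1) (contract (m j) h a2).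

Lemma contract_pair_tau (u : N) (h r s : N -> B) x v y w : bdual h -> bdual r -> bdual s ->
  contract_pair u h (tau r x v) (tau s y w) = t (i (r u) * x) (i (s v) * y * i (h w)).
Proof.
move=> hh hr hs; rewrite -mulrA -tensor2_dual_basis //; apply: eq_bigr => j _.
by rewrite !contract_tau // mulrA.
Qed.

Lemma contract_pairDl (u : N) (h : N -> B) a b c : bdual h ->
  contract_pair u h (a + b) c = contract_pair u h a c + contract_pair u h b c.
Proof.
by move=> hh; rewrite -big_split; apply: eq_bigr => j _; rewrite contract_additive ?(tensor2Dl ht).
Qed.

Lemma contract_pairDr (u : N) (h : N -> B) a b c : bdual h ->
  contract_pair u h c (a + b) = contract_pair u h c a + contract_pair u h c b.
Proof.
by move=> hh; rewrite -big_split; apply: eq_bigr => j _; rewrite contract_additive ?(tensor2Dr ht).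
Qed.

Lemma contract_pair_bal_tau (u : N) (h s : N -> B) c w a1 a2 : bdual h -> bdual s ->
  contract_pair u h (a1 * tau s (i c) w) a2 = contract_pair u h a1 (tau s (i c) w * a2).
Proof.
move=> hh hs; move: a1.
apply: (tensor3_ext htau) => [a b|a b|r x v hr]; rewrite ?mulrDl ?contract_pairDl //.
move: a2; apply: (tensor3_ext htau) => [a b|a b|r' y v' hr']; rewrite ?mulrDr ?contract_pairDr //.
by rewrite !tau_mul // !contract_pair_tau // !mulrA !tensor2_balB !mulrA.
Qed.

Lemma contract_pair_balanced (u : N) (h : N -> B) :
  bdual h -> balanced2 (Bprime i tau) (contract_pair u h).
Proof.
move=> hh; split=> [x y z|x y z|a1 b a2 [k [r [c [w [hr ->]]]]]].
- exact: contract_pairDl.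
- exact: contract_pairDr.
rewrite mulr_sumr mulr_suml.
rewrite (additive_fun_sum (h := contract_pair u h ^~ a2)) => [|? ?]; last exact: contract_pairDl.
rewrite (additive_fun_sum (h := contract_pair u h a1)) => [|? ?]; last exact: contract_pairDr.
by apply: eq_bigr => q _; apply: contract_pair_bal_tau.
Qed.

Definition phi_part (u : N) (h : N -> B) : T' -> T := lift2 t' (contract_pair u h).

Lemma phi_part_additive (u : N) (h : N -> B) : bdual h -> additive_fun (phi_part u h).
Proof. by move=> hh; apply/(lift2_additive ht')/contract_pair_balanced. Qed.

Lemma phi_part_tau (u : N) (h r s : N -> B) x v y w : bdual h -> bdual r -> bdual s ->
  phi_part u h (t' (tau r x v) (tau s y w)) = t (i (r u) * x) (i (s v) * y * i (h w)).
Proof.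
move=> hh hr hs; rewrite /phi_part (lift2_t ht') ?contract_pair_tau //.
exact: contract_pair_balanced.
Qed.

Definition psi_inv (s' : T') : T := \sum_(k < K) phi_part (n k) (g k) s'.

Definition psi_part_pair (r : N -> B) (w : N) (x y : A) : T' :=
  \sum_(k < K) t' (tau r x (n k)) (tau (g k) y w).

Lemma psi_part_pair_balanced (r : N -> B) w : bdual r -> balanced2 (rng i) (psi_part_pair r w).
Proof.
move=> hr; split=> [x y z|x y z|x b y [c ->]].
- by rewrite -big_split; apply: eq_bigr => k _; rewrite (tensor3Dm htau) // (tensor2Dl ht').
- by rewrite -big_split; apply: eq_bigr => k _; rewrite (tensor3Dm htau) // (tensor2Dr ht').
rewrite /psi_part_pair; under eq_bigr do rewrite (tensor3_bal htau) // tensor2'_split_n //.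
rewrite exchange_big; apply: eq_bigr => k _ /=.
rewrite -(tensor2_sumr ht') -(tensor3_summ htau) // -mulr_suml -rmorph_sum.
under eq_bigr do rewrite bdualZ //.
by rewrite -mulr_sumr gn1 mulr1.
Qed.

Definition psi_part (r : N -> B) (w : N) : T -> T' := lift2 t (psi_part_pair r w).

Lemma psi_part_additive (r : N -> B) w : bdual r -> additive_fun (psi_part r w).
Proof. by move=> hr; apply/(lift2_additive ht)/psi_part_pair_balanced. Qed.

Lemma psi_part_t (r : N -> B) w x y : bdual r ->
  psi_part r w (t x y) = \sum_(k < K) t' (tau r x (n k)) (tau (g k) y w).
Proof. by move=> hr; rewrite /psi_part (lift2_t ht) //; apply: psi_part_pair_balanced. Qed.

Lemma psi_sum_parts s : psi s = \sum_(j < J) psi_part (f j) (m j) s.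
Proof.
move: s; apply: (tensor2_ext ht) => // [|x y].
  by apply: additive_fun_big => j; apply: psi_part_additive.
by rewrite psi_t; apply: eq_bigr => j _; rewrite psi_part_t.
Qed.

Lemma phi_part_psi_part (u : N) (h r : N -> B) w s : bdual h -> bdual r ->
  phi_part u h (psi_part r w s) = lm (i (r u)) (rm (i (h w)) s).
Proof.
move=> hh hr; move: s; apply: (tensor2_ext ht) => [||x y].
- exact: additive_fun_comp (phi_part_additive u hh) (psi_part_additive w hr).
- exact: additive_fun_comp (lmul_additive ht _) (rmul_additive ht _).
rewrite psi_part_t // (additive_fun_sum _ _ _ (phi_part_additive u hh)).
under eq_bigr do rewrite phi_part_tau //.
rewrite -(tensor2_sumr ht) -!mulr_suml -rmorph_sum gn1 rmorph1 mul1r.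
by rewrite (rmul_t ht) (lmul_t ht).
Qed.

Lemma psiK s : tcentral (rng i) t s -> psi_inv (psi s) = s.
Proof.
move=> /(tcentralP ht) s_central.
have s_comm c : lm (i c) s = rm (i c) s by apply/s_central/rng_rmorph.
rewrite /psi_inv.
under eq_bigr => k _.
  rewrite psi_sum_parts (additive_fun_sum _ _ _ (phi_part_additive _ (g_dual k))).
  under eq_bigr do rewrite phi_part_psi_part // (lmul_rmulC ht) s_comm (rmulM ht).
  under eq_bigr do rewrite -rmorphM.
  rewrite (rmul_sum ht) -rmorph_sum bdual_dual_basis //.
  over.
by rewrite (rmul_sum ht) -rmorph_sum gn1 rmorph1 (rmul1 ht).
Qed.

Lemma psi_phi_part (u : N) (h : N -> B) s' : bdual h ->
  psi (phi_part u h s') = \sum_(j < J) lm' (tau (f j) 1 u) (rm' (tau h 1 (m j)) s').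
Proof.
move=> hh; move: s'; apply: tensor2'_ext => [||r s x v y w hr hs].
- exact: additive_fun_comp psiD (phi_part_additive u hh).
- apply: additive_fun_big => j.
  exact: additive_fun_comp (lmul_additive ht' _) (rmul_additive ht' _).
rewrite phi_part_tau // psi_t; apply: eq_bigr => j _.
rewrite (rmul_t ht') (lmul_t ht') !tau_mul // tensor2'_split_n //; apply: eq_bigr => k _.
by rewrite mul1r mulr1 !mulrA.
Qed.

Lemma psi_invK s' : tcentral (Bprime i tau) t' s' -> psi (psi_inv s') = s'.
Proof.
move=> /(tcentralP ht') s'_central.
have s'_comm (r : N -> B) w : bdual r -> lm' (tau r 1 w) s' = rm' (tau r 1 w) s'.
  by move=> hr; apply/s'_central/Bprime_tau1.
rewrite /psi_inv (additive_fun_sum _ _ _ psiD).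
under eq_bigr => k _.
  rewrite psi_phi_part //.
  under eq_bigr do rewrite (lmul_rmulC ht') s'_comm // (rmulM ht') tau_mul // mul1r mulr1.
  over.
rewrite exchange_big /=.
under eq_bigr => j _.
  rewrite (rmul_sum ht') -(tensor3_summ htau) // -rmorph_sum gn1 rmorph1.
  over.
by rewrite (rmul_sum ht') -tau_one (rmul1 ht').
Qed.

Lemma phi_part_lmul c (u : N) (h : N -> B) s' : bdual h ->
  lm (i c) (phi_part u h s') = phi_part (c *: u) h s'.
Proof.
move=> hh; move: s'; apply: tensor2'_ext => [||r s x v y w hr hs].
- exact: additive_fun_comp (lmul_additive ht _) (phi_part_additive u hh).
- exact: phi_part_additive.
by rewrite !phi_part_tau // (lmul_t ht) bdualZ // rmorphM mulrA.
Qed.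

Lemma phi_part_lmul' (u : N) (h r : N -> B) w s' : bdual h -> bdual r ->
  phi_part u h (lm' (tau r 1 w) s') = lm (i (r u)) (phi_part w h s').
Proof.
move=> hh hr; move: s'; apply: tensor2'_ext => [||r' s x v y v' hr' hs].
- exact: additive_fun_comp (phi_part_additive u hh) (lmul_additive ht' _).
- exact: additive_fun_comp (lmul_additive ht _) (phi_part_additive w hh).
by rewrite (lmul_t ht') tau_mul // !phi_part_tau // (lmul_t ht) mul1r.
Qed.

Lemma phi_part_rmul' (u : N) (h r : N -> B) w s' : bdual h -> bdual r ->
  phi_part u h (rm' (tau r 1 w) s') = rm (i (h w)) (phi_part u r s').
Proof.
move=> hh hr; move: s'; apply: tensor2'_ext => [||r' s x v y v' hr' hs].
- exact: additive_fun_comp (phi_part_additive u hh) (rmul_additive ht' _).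
- exact: additive_fun_comp (rmul_additive ht _) (phi_part_additive u hr).
by rewrite (rmul_t ht') tau_mul // !phi_part_tau // (rmul_t ht) mulr1 !mulrA.
Qed.

Lemma phi_part_central (w : N) (h : N -> B) s' : tcentral (Bprime i tau) t' s' -> bdual h ->
  phi_part w h s' = \sum_(k < K) rm (i (h w)) (phi_part (n k) (g k) s').
Proof.
move=> /(tcentralP ht') s'_central hh.
rewrite -[LHS](lmul1 ht) -(rmorph1 i) -gn1 rmorph_sum -(lmul_sum ht).
apply: eq_bigr => k _.
by rewrite -phi_part_lmul' // s'_central ?phi_part_rmul' //; apply: Bprime_tau1.
Qed.

Lemma psi_inv_central s' : tcentral (Bprime i tau) t' s' -> tcentral (rng i) t (psi_inv s').
Proof.
move=> s'_central; apply/(tcentralP ht) => _ [c ->].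
rewrite /psi_inv (additive_fun_sum _ _ _ (lmul_additive ht _)).
rewrite (additive_fun_sum _ _ _ (rmul_additive ht _)).
under eq_bigr do rewrite phi_part_lmul // phi_part_central //.
rewrite exchange_big; apply: eq_bigr => k _ /=.
rewrite (rmul_sum ht) -rmorph_sum.
under eq_bigr do rewrite bdualZ //.
by rewrite -mulr_sumr gn1 mulr1.
Qed.

Lemma psi_lmul' (r : N -> B) c w s : bdual r ->
  lm' (tau r (i c) w) (psi s) =
  \sum_(j < J) \sum_(l < J) psi_part (f l) (m j) (lm (i (r (m l) * c * f j w)) s).
Proof.
move=> hr; move: s; apply: (tensor2_ext ht) => [||x y].
- exact: additive_fun_comp (lmul_additive ht' _) psiD.
- apply: additive_fun_big => j; apply: additive_fun_big => l.
  exact: additive_fun_comp (psi_part_additive _ (f_dual l)) (lmul_additive ht _).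
rewrite psi_t (additive_fun_sum _ _ _ (lmul_additive ht' _)); apply: eq_bigr => j _.
rewrite (additive_fun_sum _ _ _ (lmul_additive ht' _)).
under eq_bigr do rewrite (lmul_t ht') tau_mul // tau_unit_l // (tensor2_suml ht').
rewrite exchange_big; apply: eq_bigr => l _.
rewrite (lmul_t ht) psi_part_t //; apply: eq_bigr => k _.
by rewrite !rmorphM !mulrA.
Qed.

Lemma psi_rmul' (r : N -> B) c w s : bdual r ->
  rm' (tau r (i c) w) (psi s) =
  \sum_(j < J) \sum_(l < J) psi_part (f j) (m l) (rm (i (r (m j) * c * f l w)) s).
Proof.
move=> hr; move: s; apply: (tensor2_ext ht) => [||x y].
- exact: additive_fun_comp (rmul_additive ht' _) psiD.
- apply: additive_fun_big => j; apply: additive_fun_big => l.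
  exact: additive_fun_comp (psi_part_additive _ (f_dual j)) (rmul_additive ht _).
rewrite psi_t (additive_fun_sum _ _ _ (rmul_additive ht' _)); apply: eq_bigr => j _.
rewrite (additive_fun_sum _ _ _ (rmul_additive ht' _)).
under eq_bigr => k _ do
  rewrite (rmul_t ht') tau_mul // (tau_unit_r (r := g k)) // (tensor2_sumr ht').
rewrite exchange_big; apply: eq_bigr => l _.
rewrite (rmul_t ht) psi_part_t //; apply: eq_bigr => k _.
by rewrite !rmorphM !mulrA.
Qed.

Lemma psi_central s : tcentral (rng i) t s -> tcentral (Bprime i tau) t' (psi s).
Proof.
move=> /(tcentralP ht) s_central.
apply/(tcentralP ht') => _ [q [r [c [w [r_dual ->]]]]].
rewrite -(lmul_sum ht') -(rmul_sum ht'); apply: eq_bigr => p _.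
rewrite psi_lmul' // psi_rmul' // exchange_big /=.
apply: eq_bigr => l _; apply: eq_bigr => j _.
by rewrite s_central //; apply: rng_rmorph.
Qed.

Lemma psi_invariant_iso :
  [/\ forall s, tcentral (rng i) t s -> tcentral (Bprime i tau) t' (psi s),
      forall s1 s2, tcentral (rng i) t s1 -> tcentral (rng i) t s2 ->
        psi s1 = psi s2 -> s1 = s2 &
      forall s', tcentral (Bprime i tau) t' s' ->
        exists2 s, tcentral (rng i) t s & psi s = s'].
Proof.
split=> [|s1 s2 c1 c2 eq_psi|s' c'].
- exact: psi_central.
- by rewrite -(psiK c1) -(psiK c2) eq_psi.
- by exists (psi_inv s'); [apply: psi_inv_central | apply: psi_invK].
Qed.

End InvariantIso.

Theorem lemma2p5 (B A : pzRingType) (i : {rmorphism B -> A}) (N : lmodType B)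
    (J K : nat) (f : 'I_J -> N -> B) (m : 'I_J -> N)
    (g : 'I_K -> N -> B) (n : 'I_K -> N)
    (A' : pzRingType) (tau : (N -> B) -> A -> N -> A')
    (T : zmodType) (t : A -> A -> T) (T' : zmodType) (t' : A' -> A' -> T')
    (psi : T -> T') :
  injective i ->
  (forall j, bdual (f j)) -> (forall k, bdual (g k)) ->
  (forall u : N, \sum_(j < J) f j u *: m j = u) ->
  \sum_(k < K) g k (n k) = 1 ->
  tensor_ring i tau f m ->
  is_tensor2 (rng i) t ->
  is_tensor2 (Bprime i tau) t' ->
  additive_fun psi ->
  (forall x y, psi (t x y) =
     \sum_(j < J) \sum_(k < K) t' (tau (f j) x (n k)) (tau (g k) y (m j))) ->
  [/\ forall s, tcentral (rng i) t s -> tcentral (Bprime i tau) t' (psi s),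
      forall s1 s2, tcentral (rng i) t s1 -> tcentral (rng i) t s2 ->
        psi s1 = psi s2 -> s1 = s2 &
      forall s', tcentral (Bprime i tau) t' s' ->
        exists2 s, tcentral (rng i) t s & psi s = s'].
Proof.
move=> _ f_dual g_dual dual_basis gn1 [htau tau_mul tau_one] ht ht' psiD psi_t.
exact: (psi_invariant_iso f_dual g_dual dual_basis gn1 htau tau_mul tau_one ht ht' psiD psi_t).
Qed.
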